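(* Let $t,x\in\mathbb{C}$ with $x\ne t$, $t\notin\{0,1\}$ and $x\notin\{0,1\}$. For $s\in\mathbb{C}\setminus\{0,1,x\}$ let $$g(s)=\begin{pmatrix}-(s-1)x & ts(s-1)\\ -(s-x) & s(s-x)\end{pmatrix}\in\mathrm{PGL}_2(\mathbb{C}).$$ Then the elements $g(s)$, $s\in\mathbb{C}\setminus\{0,1,x\}$, generate a dense subgroup of $\mathrm{PGL}_2(\mathbb{C})$. *)

From mathcomp Require Import all_boot all_algebra.
From mathcomp Require Import reals complex.
Set Implicit Arguments. Unset Strict Implicit. Unset Printing Implicit Defensive.
Import GRing.Theory Num.Theory.
Local Open Scope ring_scope.

Definition mx2 (K : Type) (a b c d : K) : 'M[K]_2 :=
  \matrix_(i < 2, j < 2)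
    if i == 0 :> nat then (if j == 0 :> nat then a else b)
    else (if j == 0 :> nat then c else d).

Definition gmat (R : realType) (t x s : R[i]) : 'M[R[i]]_2 :=
  mx2 (- ((s - 1) * x)) (t * s * (s - 1)) (- (s - x)) (s * (s - x)).

Definition gens (R : realType) (t x : R[i]) (M : 'M[R[i]]_2) : Prop :=
  exists s : R[i], [/\ s != 0, s != 1, s != x & M = gmat t x s].

Inductive gen_by (K : fieldType) (S : 'M[K]_2 -> Prop) : 'M[K]_2 -> Prop :=
| gen_one : gen_by S 1%:M
| gen_mul g w : S g -> gen_by S w -> gen_by S (g *m w)
| gen_inv g w : S g -> gen_by S w -> gen_by S (invmx g *m w).

(* A subgroup H of PGL_2(C) = GL_2(C)/C^* is dense (quotient topology) iff
   its preimage {c * w | c in C^*, w a representative} is dense in GL_2(C)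
   (the projection is open and surjective).  Density in GL_2(C), with the
   topology induced from C^4, is expressed with entrywise balls. *)
Definition PGL2_dense (R : realType) (G : 'M[R[i]]_2 -> Prop) : Prop :=
  forall (A : 'M[R[i]]_2), A \in unitmx ->
  forall eps : R, 0 < eps ->
  exists (c : R[i]) (w : 'M[R[i]]_2),
    [/\ c != 0, G w & forall i j : 'I_2, `|c * w i j - A i j| < (eps%:C)%C].

(* Write t = x k with k = kappa q.  Up to a scalar, g(s) = diag(phi s, 1) E diag(1/s, 1)
   with E = [[1, -k], [1, -1]], where phi s = x (s - 1) / (s - x) is an involution of
   C \ {0, 1, x}.  As E diag(q, 1) has order 3 in PGL_2, the product of the generators at
   phi s / q, s and phi (q s) is, up to a scalar, diag(lam s, 1) for a rational function lam
   of degree 2.  Its values cover all but finitely many scalars, so the generated group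
   contains the diagonal torus, hence E.  The torus and E already give every invertible
   matrix up to a scalar: the generated subgroup is all of PGL_2(C). *)

From mathcomp Require Import all_boot all_algebra.
From mathcomp Require Import reals complex ring.
Import GRing.Theory Num.Theory.
Local Open Scope ring_scope.
Set Implicit Arguments. Unset Strict Implicit.

Section TwoByTwo.
Variable K : fieldType.
Implicit Types a b c d p q k : K.

Lemma mx2_mul a b c d a' b' c' d' :
  mx2 a b c d *m mx2 a' b' c' d' =
  mx2 (a * a' + b * c') (a * b' + b * d') (c * a' + d * c') (c * b' + d * d').
Proof.
apply/matrixP => i j; rewrite !mxE !big_ord_recr big_ord0 /= add0r !mxE.
by case: i => [[|[|//]] ?]; case: j => [[|[|//]] ?].
Qed.

Lemma mx2_scale (s : K) a b c d : s *: mx2 a b c d = mx2 (s * a) (s * b) (s * c) (s * d).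
Proof.
by apply/matrixP => i j; rewrite !mxE; case: i => [[|[|//]] ?]; case: j => [[|[|//]] ?].
Qed.

Lemma scalar_mx2 a : a%:M = mx2 a 0 0 a :> 'M[K]_2.
Proof.
by apply/matrixP => i j; rewrite !mxE; case: i => [[|[|//]] ?]; case: j => [[|[|//]] ?].
Qed.

Lemma mx2_entries (A : 'M[K]_2) : A = mx2 (A 0 0) (A 0 1) (A 1 0) (A 1 1).
Proof.
apply/matrixP => i j; rewrite mxE.
by case: i => [[|[|//]] ?]; case: j => [[|[|//]] ?]; congr (A _ _); apply: val_inj.
Qed.

Lemma det_mx2 a b c d : \det (mx2 a b c d) = a * d - b * c.
Proof.
rewrite (expand_det_row _ ord0) !big_ord_recr big_ord0 /= add0r.
by rewrite /cofactor !det_mx11 !mxE /= expr0 expr1 mul1r mulN1r mulrN.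
Qed.

Definition diag1 a := mx2 a 0 0 1.
Definition Emx k := mx2 1 (- k) 1 (-1).
Definition dEd k a b := diag1 a *m Emx k *m diag1 b.
Definition EdE k p := Emx k *m diag1 p *m Emx k.
(* The trace of Emx (kappa q) *m diag1 q squares to its determinant, i.e. it has order 3
   in PGL_2; dEd_cycle below is this relation. *)
Definition kappa q := (q ^+ 2 - q + 1) / q.

Lemma diag1M a b : diag1 a *m diag1 b = diag1 (a * b).
Proof. by rewrite mx2_mul; congr mx2; ring. Qed.

Lemma dEd_mx k a b : dEd k a b = mx2 (a * b) (- (a * k)) b (-1).
Proof. by rewrite /dEd mx2_mul mx2_mul; congr mx2; ring. Qed.

Lemma EdE_mx k p : EdE k p = mx2 (p - k) (k * (1 - p)) (p - 1) (1 - k * p).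
Proof. by rewrite /EdE mx2_mul mx2_mul; congr mx2; ring. Qed.

Lemma EdE_mulV k p : p != 0 -> EdE k p *m EdE k p^-1 = (1 - k) ^+ 2 *: 1%:M.
Proof. by move=> p0; rewrite !EdE_mx mx2_mul scalar_mx2 mx2_scale; congr mx2; field. Qed.

Lemma kappa_neq1 q : q != 0 -> q != 1 -> kappa q != 1.
Proof.
move=> q0 q1; rewrite -subr_eq0 (_ : _ - 1 = (q - 1) ^+ 2 / q); last by rewrite /kappa; field.
by rewrite mulf_neq0 ?invr_eq0 // expf_neq0 // subr_eq0.
Qed.

Lemma dEd_cycle q a1 a2 b2 b3 : q != 0 -> a2 != 0 -> b2 != 0 ->
  dEd (kappa q) a1 (q / a2) *m dEd (kappa q) a2 b2 *m dEd (kappa q) (q / b2) b3 =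
  ((1 - kappa q) * (kappa q * q - 1)) *: diag1 (a1 * b3 / q).
Proof.
move=> q0 a20 b20; rewrite !dEd_mx !mx2_mul mx2_scale /kappa.
by congr mx2; field; rewrite ?q0 ?a20 ?b20.
Qed.

End TwoByTwo.

Section ProjectiveClosure.
Variables (K : fieldType) (S : 'M[K]_2 -> Prop).

(* The preimage in GL_2 of the subgroup of PGL_2 generated by S. *)
Definition proj_gen_by (M : 'M[K]_2) : Prop :=
  exists c w, [/\ c != 0, gen_by S w & M = c *: w].

Lemma gen_by_mul w1 w2 : gen_by S w1 -> gen_by S w2 -> gen_by S (w1 *m w2).
Proof.
elim=> [|g w Sg _ IH|g w Sg _ IH] Sw2; first by rewrite mul1mx.
  by rewrite -mulmxA; apply: gen_mul => //; apply: IH.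
by rewrite -mulmxA; apply: gen_inv => //; apply: IH.
Qed.

Lemma proj_gen_by_mul A B : proj_gen_by A -> proj_gen_by B -> proj_gen_by (A *m B).
Proof.
move=> [c [w [c0 Sw ->]]] [c' [w' [c0' Sw' ->]]].
exists (c * c'), (w *m w'); split; first by rewrite mulf_neq0.
  exact: gen_by_mul.
by rewrite -scalemxAl -scalemxAr scalerA.
Qed.

Lemma proj_gen_by_scale c A : c != 0 -> proj_gen_by A -> proj_gen_by (c *: A).
Proof.
move=> c0 [c' [w [c0' Sw ->]]]; exists (c * c'), w.
by rewrite scalerA mulf_neq0.
Qed.

Lemma proj_gen_by_gen A : S A -> proj_gen_by A.
Proof.
move=> SA; exists 1, A; rewrite oner_neq0 scale1r; split => //.
by rewrite -[A]mulmx1; apply: gen_mul => //; apply: gen_one.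
Qed.

End ProjectiveClosure.

Lemma affine_neq0 (K : fieldType) (u v p : K) :
  (u != 0) || (v != 0) -> p != v / u -> u * p - v != 0.
Proof.
case: (eqVneq u 0) => [-> /= v0 _|u0 _ pv]; first by rewrite mul0r sub0r oppr_eq0.
rewrite (_ : u * p - v = u * (p - v / u)); last by field.
by rewrite mulf_neq0 // subr_eq0.
Qed.

Section ClosedField.
Variable K : closedFieldType.

Lemma exists_notin (l : seq K) : exists r, r \notin l.
Proof.
have /closed_nonrootP[r] := monic_neq0 (monic_prod_XsubC l xpredT id).
by rewrite root_prod_XsubC; exists r.
Qed.

Lemma monic_quadratic_root (b c : K) : exists r, r ^+ 2 + b * r + c = 0.
Proof.
have [r] := @solve_monicpoly _ 2 (fun i => if i == 0%N then - c else - b) isT.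
rewrite !big_ord_recr big_ord0 /= add0r expr0 expr1 mulr1 => rE.
by exists r; rewrite rE; ring.
Qed.

Lemma rational_fun_cofinite (N D : {poly K}) (F : seq K) :
  (1 < size D)%N -> coprimep D N ->
  exists Bad : seq K, forall c, c \notin Bad -> exists2 s, s \notin F & N.[s] / D.[s] = c.
Proof.
move=> D_gt1 /Pdiv.ClosedField.coprimepP DN.
exists [:: 0, lead_coef N / lead_coef D & [seq N.[b] / D.[b] | b <- F]] => c.
rewrite !in_cons !negb_or => /and3P[c0 c_lead c_F].
have lcD0 : lead_coef D != 0 by rewrite lead_coef_eq0 -size_poly_gt0 ltnW.
have : size (N - c *: D) != 1.
  apply: contra c_lead => /eqP size1; apply/eqP.
  by rewrite -[N](subrK (c *: D)) lead_coefDr ?lead_coefZ ?mulfK // size_scale // size1.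
case/closed_rootP=> s; rewrite rootE !hornerE subr_eq0 => /eqP NcD.
have Ds0 : D.[s] != 0.
  by apply/eqP => Ds0; move: (DN s); rewrite rootE NcD Ds0 mulr0 eqxx => /(_ isT).
exists s; last by rewrite NcD mulfK.
by apply: contra c_F => sF; apply/mapP; exists s; rewrite // NcD mulfK.
Qed.

End ClosedField.

Section TorusAndOneMatrixGenerate.
Variables (K : closedFieldType) (k : K) (H : 'M[K]_2 -> Prop).
Hypotheses (k0 : k != 0) (k1 : k != 1).
Hypothesis H_mul : forall A B, H A -> H B -> H (A *m B).
Hypothesis H_scale : forall c A, c != 0 -> H A -> H (c *: A).
Hypothesis H_diag1 : forall a, a != 0 -> H (diag1 a).
Hypothesis H_Emx : H (Emx k).

Lemma H_unscale c A : c != 0 -> H (c *: A) -> H A.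
Proof.
by move=> c0 /(H_scale (invr_neq0 c0)); rewrite scalerA mulVf // scale1r.
Qed.

Lemma H_diag a b : a != 0 -> b != 0 -> H (mx2 a 0 0 b).
Proof.
move=> a0 b0; have -> : mx2 a 0 0 b = b *: diag1 (a / b).
  by rewrite mx2_scale; congr mx2; field.
by apply/H_scale/H_diag1; rewrite // mulf_neq0 ?invr_eq0.
Qed.

Lemma H_EdE p : p != 0 -> H (EdE k p).
Proof. by move=> p0; apply: H_mul (H_mul H_Emx (H_diag1 p0)) H_Emx. Qed.

Lemma H_diag_equiv a b c d a' b' c' d' :
  a != 0 -> b != 0 -> c != 0 -> a' != 0 -> b' != 0 -> c' != 0 ->
  a * d * b' * c' = a' * d' * b * c ->
  H (mx2 a' b' c' d') -> H (mx2 a b c d).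
Proof.
move=> a0 b0 c0 a0' b0' c0' cross HM.
have -> : d = a' * d' * b * c / (a * b' * c') by rewrite -cross; field; rewrite ?a0 ?b0' ?c0'.
have -> : mx2 a b c (a' * d' * b * c / (a * b' * c')) =
    mx2 1 0 0 (c * a' / (a * c')) *m mx2 a' b' c' d' *m mx2 (a / a') 0 0 (b / b').
  by rewrite !mx2_mul; congr mx2; field; rewrite ?a0 ?a0' ?b0' ?c0'.
apply: H_mul (H_mul (H_diag _ _) HM) (H_diag _ _);
  by rewrite ?oner_neq0 ?mulf_neq0 ?invr_eq0 ?mulf_neq0.
Qed.

Lemma EdE_cross_ratio a b c d :
  a != 0 -> b != 0 -> c != 0 -> d != 0 -> a * d - b * c != 0 ->
  exists p, [/\ p != 0, p != k, p != 1 &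
    a * d * (k * (1 - p)) * (p - 1) = (p - k) * (1 - k * p) * b * c].
Proof.
move=> a0 b0 c0 d0 det0.
have k1' : 1 - k != 0 by rewrite subr_eq0 eq_sym.
have bc0 : b * c != 0 by rewrite mulf_neq0.
pose r := a * d / (b * c).
have adr : a * d = r * (b * c) by rewrite divfK.
have r0 : r != 0 by rewrite mulf_neq0 ?invr_eq0 ?mulf_neq0.
have r1 : r - 1 != 0.
  by rewrite (_ : r - 1 = (a * d - b * c) / (b * c)) ?mulf_neq0 ?invr_eq0 // adr; field; rewrite ?b0 ?c0.
clearbody r.
have [p p_root] := monic_quadratic_root ((1 + k ^+ 2 - 2 * r * k) / (k * (r - 1))) 1.
have cross : (p - k) * (1 - k * p) = r * k * (1 - p) * (p - 1).
  apply/eqP; rewrite -subr_eq0 (_ : _ - _ =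
    k * (r - 1) * (p ^+ 2 + (1 + k ^+ 2 - 2 * r * k) / (k * (r - 1)) * p + 1)).
    by rewrite p_root mulr0.
  by field; rewrite k0 r1.
exists p; split.
- apply/eqP => p0; move/eqP: p_root.
  by rewrite p0 expr0n mulr0 !add0r oner_eq0.
- apply/eqP => pk; move/esym/eqP: cross; apply/negP.
  by rewrite pk subrr !mul0r !mulf_neq0 // -opprB oppr_eq0.
- apply/eqP => p1; move/eqP: cross; apply/negP.
  by rewrite p1 subrr !mulr0 mulr1 mulf_neq0.
by rewrite adr -(mulrA _ b) cross; ring.
Qed.

Lemma H_entries_neq0 a b c d :
  a != 0 -> b != 0 -> c != 0 -> d != 0 -> a * d - b * c != 0 -> H (mx2 a b c d).
Proof.
move=> a0 b0 c0 d0 det0.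
have [p [p0 pk p1 cross]] := EdE_cross_ratio a0 b0 c0 d0 det0.
apply: (H_diag_equiv a0 b0 c0 _ _ _ cross).
- by rewrite subr_eq0.
- by rewrite mulf_neq0 // subr_eq0 eq_sym.
- by rewrite subr_eq0.
- by rewrite -EdE_mx; apply: H_EdE.
Qed.

Lemma mx2_EdE_row_neq0 a b p : (a != 0) || (b != 0) ->
  p != (a * k + b) / (a + b) -> p != (a * k + b) / (k * (a + b)) ->
  a * (p - k) + b * (p - 1) != 0 /\ a * (k * (1 - p)) + b * (1 - k * p) != 0.
Proof.
move=> ab p_l p_r.
have ab' : (a + b != 0) || (a * k + b != 0).
  apply: contraLR ab; rewrite !negb_or !negbK => /andP[/eqP s0 /eqP l0].
  have : a * (k - 1) = (a * k + b) - (a + b) by ring.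
  rewrite s0 l0 subrr => /eqP.
  rewrite mulf_eq0 subr_eq0 (negbTE k1) orbF => /eqP a0.
  by move: s0; rewrite a0 add0r => ->; rewrite eqxx.
split.
  rewrite (_ : _ + _ = (a + b) * p - (a * k + b)); last by ring.
  exact: affine_neq0.
rewrite (_ : _ + _ = - (k * (a + b) * p - (a * k + b))); last by ring.
by rewrite oppr_eq0 affine_neq0 // mulf_eq0 negb_or k0.
Qed.

Lemma GL2_from_torus_Emx A : A \in unitmx -> H A.
Proof.
rewrite [A]mx2_entries unitmxE unitfE det_mx2.
move: (A 0 0) (A 0 1) (A 1 0) (A 1 1) => a b c d det0.
have ab : (a != 0) || (b != 0).
  by apply: contraNT det0; rewrite negb_or !negbK => /andP[/eqP-> /eqP->]; rewrite !mul0r subrr.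
have cd : (c != 0) || (d != 0).
  by apply: contraNT det0; rewrite negb_or !negbK => /andP[/eqP-> /eqP->]; rewrite !mulr0 subrr.
have [p] := exists_notin [:: 0; (a * k + b) / (a + b); (a * k + b) / (k * (a + b));
  (c * k + d) / (c + d); (c * k + d) / (k * (c + d))].
rewrite !inE !negb_or => /and5P[p0 p_ab p_ab' p_cd p_cd'].
have [e11 e12] := mx2_EdE_row_neq0 ab p_ab p_ab'.
have [e21 e22] := mx2_EdE_row_neq0 cd p_cd p_cd'.
have k1' : 1 - k != 0 by rewrite subr_eq0 eq_sym.
have HAE : H (mx2 a b c d *m EdE k p).
  rewrite EdE_mx mx2_mul; apply: H_entries_neq0 => //.
  rewrite (_ : _ - _ = (a * d - b * c) * (p * (1 - k) ^+ 2)); last by ring.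
  by rewrite !mulf_neq0 // expf_neq0.
apply: (@H_unscale ((1 - k) ^+ 2)); first by rewrite expf_neq0.
have -> : (1 - k) ^+ 2 *: mx2 a b c d = mx2 a b c d *m EdE k p *m EdE k p^-1.
  by rewrite -mulmxA EdE_mulV // -scalemxAr mulmx1.
by apply: H_mul HAE (H_EdE _); rewrite invr_neq0.
Qed.

End TorusAndOneMatrixGenerate.

Definition phi (K : fieldType) (x s : K) := x * (s - 1) / (s - x).

Section Involution.
Variables (K : fieldType) (x : K).
Hypotheses (x0 : x != 0) (x1 : x != 1).

Lemma phi_neq_x s : phi x s != x.
Proof.
have [->|sx] := eqVneq s x; first by rewrite /phi subrr invr0 mulr0 eq_sym.
rewrite -subr_eq0 (_ : _ - x = x * (x - 1) / (s - x)).
  by rewrite !mulf_neq0 ?invr_eq0 ?subr_eq0.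
by rewrite /phi; field; rewrite subr_eq0.
Qed.

Lemma phiK s : s != x -> phi x (phi x s) = s.
Proof.
move=> sx; rewrite /phi; field.
by rewrite subr_eq0 sx (_ : _ + _ = x * (x - 1)) ?mulf_neq0 ?subr_eq0 //; ring.
Qed.

Lemma phi_notin s : s \notin [:: 0; 1; x] -> phi x s \notin [:: 0; 1; x].
Proof.
rewrite !inE !negb_or phi_neq_x !andbT => /and3P[s0 s1 sx].
have sx' : s - x != 0 by rewrite subr_eq0.
apply/andP; split.
  by rewrite !mulf_neq0 ?invr_eq0 ?subr_eq0.
rewrite -subr_eq0 (_ : _ - 1 = s * (x - 1) / (s - x)).
  by rewrite !mulf_neq0 ?invr_eq0 ?subr_eq0.
by rewrite /phi; field.
Qed.

End Involution.

(* The diagonal entry that dEd_cycle extracts from the generators at phi x s / q, s and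
   phi x (q * s). *)
Definition lam (K : fieldType) (x q s : K) :=
  phi x (phi x s / q) / phi x (q * s) / q.
Definition lam_num (K : fieldType) (x q : K) : {poly K} :=
  ((x - q) *: 'X + (x * (q - 1))%:P) * (q *: 'X - x%:P).
Definition lam_den (K : fieldType) (x q : K) : {poly K} :=
  (q * x) *: ((q *: 'X - 1) * ((1 - q) *: 'X + (q * x - 1)%:P)).

Section TorusFromGenerators.
Variables (K : closedFieldType) (x q : K) (H : 'M[K]_2 -> Prop).
Hypotheses (x0 : x != 0) (x1 : x != 1) (q0 : q != 0) (q1 : q != 1).
Hypotheses (k0 : kappa q != 0) (xk1 : x * kappa q != 1).
Hypothesis H_mul : forall A B, H A -> H B -> H (A *m B).
Hypothesis H_scale : forall c A, c != 0 -> H A -> H (c *: A).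
Hypothesis H_gen :
  forall s, s \notin [:: 0; 1; x] -> H (dEd (kappa q) (phi x s) s^-1).

Let F := [:: 0; 1; x; q^-1; x / q; phi x q; phi x (q * x)].

Lemma lam_args_notin s : s \notin F ->
  [/\ s \notin [:: 0; 1; x], phi x s / q \notin [:: 0; 1; x]
    & q * s \notin [:: 0; 1; x]].
Proof.
rewrite /F !inE !negb_or => /and4P[s0 s1 sx /and4P[sq sxq sphq sphqx]].
have s_adm : s \notin [:: 0; 1; x] by rewrite !inE !negb_or s0 s1 sx.
have := phi_notin x0 x1 s_adm; rewrite !inE !negb_or => /and3P[ph0 _ _].
split; first by rewrite s0 s1 sx.
  rewrite mulf_neq0 ?invr_eq0 //=; apply/andP; split.
    apply: contra sphq => /eqP e; apply/eqP.
    by rewrite -[s](phiK x0 x1 sx) -[phi x s](divfK q0) e mul1r.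
  apply: contra sphqx => /eqP e; apply/eqP.
  by rewrite -[s](phiK x0 x1 sx) -[phi x s](divfK q0) e mulrC.
rewrite mulf_neq0 //=; apply/andP; split.
  by apply: contra sq => /eqP e; apply/eqP; rewrite -[s](mulKf q0) e mulr1.
by apply: contra sxq => /eqP e; apply/eqP; rewrite -[s](mulKf q0) e mulrC.
Qed.

Lemma H_diag1_lam s : s \notin F -> H (diag1 (lam x q s)).
Proof.
have notin_neq a : a \notin [:: 0; 1; x] -> a != 0 /\ a != x.
  by rewrite !inE !negb_or => /and3P[].
case/lam_args_notin=> s_adm s1_adm qs_adm.
have s3_adm := phi_notin x0 x1 qs_adm.
have [s0 _] := notin_neq _ s_adm; have [_ qsx] := notin_neq _ qs_adm.
have [ph0 _] := notin_neq _ (phi_notin x0 x1 s_adm).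
have e3 : q / s^-1 = phi x (phi x (q * s)) by rewrite invrK phiK.
have := dEd_cycle (phi x (phi x s / q)) (phi x (q * s))^-1 q0 ph0 (invr_neq0 s0).
rewrite e3 -(invf_div (phi x s) q) => cycle.
have c0 : (1 - kappa q) * (kappa q * q - 1) != 0.
  rewrite mulf_neq0 //; first by rewrite subr_eq0 eq_sym kappa_neq1.
  by rewrite (_ : _ - 1 = q * (q - 1)) ?mulf_neq0 ?subr_eq0 // /kappa; field.
apply: (H_unscale H_scale c0); rewrite /lam -cycle.
exact: H_mul (H_mul (H_gen s1_adm) (H_gen s_adm)) (H_gen s3_adm).
Qed.

Lemma lamE s : s \notin F -> lam x q s = (lam_num x q).[s] / (lam_den x q).[s].
Proof.
case/lam_args_notin; rewrite !inE !negb_or.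
move=> /and3P[_ _ sx] /and3P[_ _ s1x] /and3P[_ qs1 qsx].
have d1 : x * (s - 1) + - x * ((s - x) * q) != 0.
  have -> : x * (s - 1) + - x * ((s - x) * q) = q * (s - x) * (phi x s / q - x).
    by rewrite /phi; field; rewrite subr_eq0 sx q0.
  by rewrite !mulf_neq0 ?subr_eq0.
have d2 : (1 - q) * s + (q * x - 1) != 0.
  apply: contra d1 => /eqP d20.
  have -> : x * (s - 1) + - x * ((s - x) * q) = x * ((1 - q) * s + (q * x - 1)) by ring.
  by rewrite d20 mulr0.
rewrite /lam /phi !(hornerM, hornerD, hornerZ, hornerX, hornerC, hornerN).
by field; rewrite d1 d2 x0 q0 !subr_eq0 qs1 qsx sx.
Qed.

Lemma size_lam_den : (1 < size (lam_den x q))%N.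
Proof.
have den1 : (lam_den x q).[1] != 0.
  rewrite !(hornerM, hornerD, hornerZ, hornerX, hornerC, hornerN).
  rewrite (_ : _ * _ = q * x * (q - 1) * (q * (x - 1))); last by ring.
  by rewrite !mulf_neq0 ?subr_eq0.
apply: (@root_size_gt1 _ q^-1); first by apply: contraNneq den1 => ->; rewrite horner0.
rewrite rootE !(hornerM, hornerD, hornerZ, hornerX, hornerC, hornerN) mulfV //.
by rewrite subrr mul0r mulr0.
Qed.

Lemma coprimep_lam : coprimep (lam_den x q) (lam_num x q).
Proof.
have q1' : 1 - q != 0 by rewrite subr_eq0 eq_sym.
have xk1' : x * kappa q - 1 != 0 by rewrite subr_eq0.
apply/Pdiv.ClosedField.coprimepP => r.
rewrite rootE !(hornerM, hornerD, hornerZ, hornerX, hornerC, hornerN).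
rewrite [_ == 0]mulf_eq0 (negbTE (mulf_neq0 q0 x0)) mulf_eq0 /= => /orP[] /eqP r_root.
  have -> : r = q^-1 by rewrite -[r](mulKf q0) (subr0_eq r_root) mulr1.
  rewrite (_ : (_ + _) * (_ - _) = (x * kappa q - 1) * (1 - x)); last by rewrite /kappa; field.
  by rewrite mulf_neq0 // subr_eq0 eq_sym.
have -> : r = (1 - q * x) / (1 - q).
  by apply: (mulIf q1'); rewrite divfK // -[RHS]add0r -r_root; ring.
rewrite (_ : (_ + _) * (_ - _) = q ^+ 2 * (x - 1) ^+ 2 * (x * kappa q - 1) / (1 - q) ^+ 2).
  by rewrite !mulf_neq0 ?invr_eq0 ?expf_neq0 // subr_eq0.
by rewrite /kappa; field; rewrite q1' q0.
Qed.

Lemma H_diag1 c : c != 0 -> H (diag1 c).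
Proof.
move=> c0.
have [Bad H_Bad] : exists Bad : seq K, forall c, c \notin Bad -> H (diag1 c).
  have [Bad lam_Bad] := rational_fun_cofinite F size_lam_den coprimep_lam.
  exists Bad => c' /lam_Bad[s sF <-].
  by rewrite -lamE //; apply: H_diag1_lam.
have [c1] := exists_notin (0 :: Bad ++ [seq c / b | b <- Bad]).
rewrite in_cons mem_cat !negb_or => /and3P[c10 c1_Bad c1_cBad].
have -> : diag1 c = diag1 c1 *m diag1 (c / c1) by rewrite diag1M; congr diag1; field.
apply: H_mul (H_Bad _ c1_Bad) (H_Bad _ _).
apply: contra c1_cBad => ccBad; apply/mapP; exists (c / c1) => //.
by field; rewrite c0 c10.
Qed.

Lemma H_Emx : H (Emx (kappa q)).
Proof.
have [s s_adm] := exists_notin [:: 0; 1; x].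
have := phi_notin x0 x1 s_adm; rewrite !inE !negb_or => /and3P[ph0 _ _].
move: (s_adm); rewrite !inE !negb_or => /and3P[s0 _ _].
have -> : Emx (kappa q) = diag1 (phi x s)^-1 *m dEd (kappa q) (phi x s) s^-1 *m diag1 s.
  by rewrite dEd_mx /Emx /diag1 !mx2_mul; congr mx2; field; rewrite ?ph0 ?s0.
apply: H_mul (H_mul (H_diag1 _) (H_gen s_adm)) (H_diag1 _) => //.
by rewrite invr_neq0.
Qed.

Lemma GL2_from_dEd_generators A : A \in unitmx -> H A.
Proof. exact: GL2_from_torus_Emx k0 (kappa_neq1 q0 q1) H_mul H_scale H_diag1 H_Emx A. Qed.

End TorusFromGenerators.

Lemma gmat_dEd (R : realType) (t x q s : R[i]) :
  t = x * kappa q -> s != 0 -> s != x ->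
  gmat t x s = (- ((s - x) * s)) *: dEd (kappa q) (phi x s) s^-1.
Proof.
move=> -> s0 sx; rewrite dEd_mx mx2_scale /gmat /phi.
by congr mx2; field; rewrite ?s0 ?subr_eq0 ?sx.
Qed.

Lemma kappa_surj (K : closedFieldType) (x t : K) :
  x != 0 -> exists2 q, q != 0 & t = x * kappa q.
Proof.
move=> x0; have [q q_root] := monic_quadratic_root (- (1 + t / x)) 1.
have q0 : q != 0.
  by apply/eqP => q0; move/eqP: q_root; rewrite q0 expr0n mulr0 !add0r oner_eq0.
exists q => //; have -> : kappa q = t / x.
  by rewrite /kappa -[_ + 1]subr0 -q_root; field; rewrite ?x0 ?q0.
by rewrite mulrC divfK.
Qed.

Unset Implicit Arguments.

Theorem lemma3p10 (R : realType) (t x : R[i]) :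
  x != t -> t != 0 -> t != 1 -> x != 0 -> x != 1 ->
  PGL2_dense (gen_by (gens t x)).
Proof.
move=> xt t0 t1 x0 x1.
have [q q0 tE] := kappa_surj t x0.
have q1 : q != 1.
  by apply: contra_neq xt => q1; rewrite tE q1 /kappa expr1n subrr add0r divr1 mulr1.
have k0 : kappa q != 0 by apply: contra_neq t0 => k0; rewrite tE k0 mulr0.
have xk1 : x * kappa q != 1 by rewrite -tE.
have H_gen s : s \notin [:: 0; 1; x] ->
    proj_gen_by (gens t x) (dEd (kappa q) (phi x s) s^-1).
  rewrite !inE !negb_or => /and3P[s0 s1 sx].
  have c0 : - ((s - x) * s) != 0 by rewrite oppr_eq0 mulf_neq0 ?subr_eq0.
  rewrite -[dEd _ _ _](scalerK c0) -(gmat_dEd tE s0 sx).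
  apply: proj_gen_by_scale; first by rewrite invr_neq0.
  by apply: proj_gen_by_gen; exists s.
move=> A A_unit eps eps0.
have [c [w [c0 w_gen ->]]] := GL2_from_dEd_generators x0 x1 q0 q1 k0 xk1
  (@proj_gen_by_mul _ _) (@proj_gen_by_scale _ _) H_gen A_unit.
by exists c, w; split => // i j; rewrite mxE subrr normr0 ltcR.
Qed.
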